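(* Let $S$ be a monoid and let $r$ be a Hoehnke radical of $S$-acts such that (i) $r(A)$ is a Rees congruence for every $S$-act $A$, and (ii) $r(B)=\nabla_B$ for every $S$-act $A$ and every $B\in\Sigma_{r(A)}$. Then $r$ also satisfies: (iii) for every $S$-act $A$, every $\mathbb{R}_r$-system $\Sigma$ of $A$ and every $B\in\Sigma$, there exists $C\in\Sigma_{r(A)}$ with $B\le C$. That is, $r$ is a Kurosh–Amitsur radical.
   Context: An $S$-act over a monoid $S$ is a set $A$ with an action $(s,a)\mapsto sa$ satisfying $s(ta)=(st)a$ and $1a=a$; homomorphisms are action-preserving maps. An $S$-act is trivial if $|A|\le1$. Congruences are action-compatible equivalence relations; $\Delta_A$ and $\nabla_A=A\times A$ are the least and greatest congruences on $A$, and for a subact $B$, $\nabla_B=B\times B$. A Rees congruence is a congruence each of whose classes is a subact or a singleton; $\Sigma_\rho$ is the set of classes of $\rho$ that are non-trivial subacts. A (normal) Hoehnke radical is an assignment $r$ giving each $S$-act $A$ a congruence $r(A)$ such that (a) for every homomorphism $f:A\to B$, $(a,a')\in r(A)$ implies $(f(a),f(a'))\in r(B)$, and (b) $r(A/r(A))=\Delta_{A/r(A)}$. $\mathbb{R}_r=\{A: r(A)=\nabla_A\}$. An $\mathbb{R}_r$-system of $A$ is a set of pairwise disjoint non-trivial subacts of $A$ each belonging to $\mathbb{R}_r$. A Kurosh–Amitsur radical is a Hoehnke radical satisfying (i), (ii) and (iii). *)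

From Stdlib Require Import ClassicalEpsilon FunctionalExtensionality
  PropExtensionality ProofIrrelevance.

Set Implicit Arguments.
Unset Strict Implicit.

Record monoid := Monoid {
  mcar :> Type;
  mmul : mcar -> mcar -> mcar;
  mone : mcar;
  mmulA : forall x y z, mmul x (mmul y z) = mmul (mmul x y) z;
  mmul1l : forall x, mmul mone x = x;
  mmul1r : forall x, mmul x mone = x }.
Arguments mmul : clear implicits.
Arguments mone : clear implicits.

Record act (S : monoid) := Act {
  acar :> Type;
  aop : mcar S -> acar -> acar;
  aopA : forall s t a, aop s (aop t a) = aop (mmul S s t) a;
  aop1 : forall a, aop (mone S) a = a }.

Arguments aop {S} a s x : rename.

Definition is_hom (S : monoid) (A B : act S) (f : A -> B) : Prop :=
  forall s a, f (aop A s a) = aop B s (f a).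

Definition nontrivial_set (T : Type) (P : T -> Prop) : Prop :=
  exists x y, P x /\ P y /\ x <> y.

Definition is_congruence (S : monoid) (A : act S) (R : A -> A -> Prop) : Prop :=
  (forall a, R a a) /\ (forall a b, R a b -> R b a) /\
  (forall a b c, R a b -> R b c -> R a c) /\
  (forall s a b, R a b -> R (aop A s a) (aop A s b)).

Definition Delta (T : Type) (x y : T) : Prop := x = y.
Definition Nabla (T : Type) (x y : T) : Prop := True.

Definition is_subact (S : monoid) (A : act S) (P : A -> Prop) : Prop :=
  forall s a, P a -> P (aop A s a).

Section SubAct.
Variables (S : monoid) (A : act S) (P : A -> Prop) (HP : is_subact P).

Definition sub_op (s : S) (x : {a : A | P a}) : {a : A | P a} :=
  exist _ (aop A s (proj1_sig x)) (HP s (proj2_sig x)).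

Lemma sub_opA s t x : sub_op s (sub_op t x) = sub_op (mmul S s t) x.
Proof.
destruct x as [a Pa]; unfold sub_op; simpl.
apply eq_sig_hprop; [intros; apply proof_irrelevance|]. simpl. apply aopA.
Qed.

Lemma sub_op1 x : sub_op (mone S) x = x.
Proof.
destruct x as [a Pa]; unfold sub_op; simpl.
apply eq_sig_hprop; [intros; apply proof_irrelevance|]. simpl. apply aop1.
Qed.

Definition sub_act : act S := Act sub_opA sub_op1.
End SubAct.

Definition class_of (T : Type) (R : T -> T -> Prop) (x : T) : T -> Prop := R x.

Definition is_rees (S : monoid) (A : act S) (R : A -> A -> Prop) : Prop :=
  forall x, is_subact (class_of R x) \/ (forall y, R x y -> y = x).

Definition in_Sigma (S : monoid) (A : act S) (R : A -> A -> Prop)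
    (B : A -> Prop) : Prop :=
  (exists x, forall y, B y <-> R x y) /\ is_subact B /\ nontrivial_set B.

Section Quotient.
Variables (S : monoid) (A : act S) (R : A -> A -> Prop) (HR : is_congruence R).

Definition qcar : Type := {P : A -> Prop | exists a, P = R a}.

Definition qclass (a : A) : qcar := exist _ (R a) (ex_intro _ a eq_refl).

Definition qrep (P : qcar) : A :=
  proj1_sig (constructive_indefinite_description _ (proj2_sig P)).

Lemma qrepP (P : qcar) : proj1_sig P = R (qrep P).
Proof.
unfold qrep. destruct (constructive_indefinite_description _ _). exact e.
Qed.

Lemma qclass_eq a b : R a b -> qclass a = qclass b.
Proof.
destruct HR as [Hr [Hs [Ht _]]]. intros Hab.
apply eq_sig_hprop; [intros; apply proof_irrelevance|]. simpl.
apply functional_extensionality; intro c; apply propositional_extensionality.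
split; intro H; eauto.
Qed.

Lemma qclass_rep P : qclass (qrep P) = P.
Proof.
apply eq_sig_hprop; [intros; apply proof_irrelevance|]. simpl.
symmetry; apply qrepP.
Qed.

Lemma qrep_class a : R a (qrep (qclass a)).
Proof.
destruct HR as [Hr _].
pose proof (qrepP (qclass a)) as E; simpl in E.
rewrite E. apply Hr.
Qed.

Definition qop (s : S) (P : qcar) : qcar := qclass (aop A s (qrep P)).

Lemma qopA s t P : qop s (qop t P) = qop (mmul S s t) P.
Proof.
unfold qop. apply qclass_eq.
destruct HR as [Hr [Hs [Ht Hc]]].
rewrite <- aopA. apply Hc. apply Hs. apply qrep_class.
Qed.

Lemma qop1 P : qop (mone S) P = P.
Proof. unfold qop. rewrite aop1. apply qclass_rep. Qed.

Definition quot_act : act S := Act qopA qop1.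
End Quotient.

Record hoehnke_radical (S : monoid)
    (r : forall A : act S, A -> A -> Prop) : Prop := {
  hr_cong : forall A : act S, is_congruence (r A);
  hr_hom : forall (A B : act S) (f : A -> B), is_hom f ->
    forall a a', r A a a' -> r B (f a) (f a');
  hr_quot : forall A : act S,
    forall x y, r (quot_act (hr_cong A)) x y -> Delta x y }.

Definition in_radical_class (S : monoid) (r : forall A : act S, A -> A -> Prop)
    (A : act S) : Prop := forall x y, r A x y <-> Nabla x y.

Definition is_Rr_system (S : monoid) (r : forall A : act S, A -> A -> Prop)
    (A : act S) (Sig : (A -> Prop) -> Prop) : Prop :=
  (forall B, Sig B ->
     nontrivial_set B /\
     exists HB : is_subact B, in_radical_class r (sub_act HB)) /\
  (forall B B', Sig B -> Sig B' ->
     (exists x, B x /\ B' x) -> forall x, B x <-> B' x).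

(* A radical subact B of A maps into A by the inclusion homomorphism, so all
   its elements are r(A)-related and B lies in a single r(A)-class. That class
   contains two distinct elements of B, so by the Rees property it is a subact,
   i.e. a member of Sigma_{r(A)}. *)

Lemma sub_act_val_hom {S : monoid} {A : act S} {B : A -> Prop}
  (HB : is_subact B) : is_hom (fun z : sub_act HB => proj1_sig z).
Proof. intros s z; reflexivity. Qed.

Lemma radical_subact_related {S : monoid} {r : forall A : act S, A -> A -> Prop}
  (Hr : hoehnke_radical r) {A : act S} {B : A -> Prop} {HB : is_subact B} :
  in_radical_class r (sub_act HB) -> forall a b, B a -> B b -> r A a b.
Proof.
  intros Hrad a b Ba Bb.
  exact (hr_hom Hr (sub_act_val_hom HB)
           (proj2 (Hrad (exist _ a Ba) (exist _ b Bb)) I)).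
Qed.

Lemma rees_class_in_Sigma {S : monoid} {A : act S} {R : A -> A -> Prop}
  (HR : is_congruence R) (Hrees : is_rees R) {x y : A} :
  R x y -> x <> y -> in_Sigma R (class_of R x).
Proof.
  intros Rxy Hxy.
  destruct HR as [Hrefl _].
  split; [exists x; intro z; unfold class_of; tauto|].
  split.
  - destruct (Hrees x) as [Hsub | Hsingle]; [exact Hsub|].
    exfalso; apply Hxy; symmetry; exact (Hsingle y Rxy).
  - exists x, y; unfold class_of; auto.
Qed.

Theorem corollary2p6 (S : monoid) (r : forall A : act S, A -> A -> Prop)
  (Hr : hoehnke_radical r)
  (Hi : forall A : act S, is_rees (r A))
  (Hii : forall (A : act S) (B : A -> Prop), in_Sigma (r A) B ->
           forall HB : is_subact B, in_radical_class r (sub_act HB)) :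
  forall (A : act S) (Sig : (A -> Prop) -> Prop), is_Rr_system r Sig ->
  forall B, Sig B ->
  exists C, in_Sigma (r A) C /\ (forall x, B x -> C x).
Proof.
  intros A Sig [Hsys _] B HB.
  destruct (Hsys B HB) as [[x [y [Bx [By Hxy]]]] [HBsub Hrad]].
  pose proof (radical_subact_related Hr Hrad) as Hrel.
  exists (class_of (r A) x); split.
  - exact (rees_class_in_Sigma (hr_cong Hr A) (Hi A) (Hrel x y Bx By) Hxy).
  - intros z Bz; exact (Hrel x z Bx Bz).
Qed.
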